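(* Let $\Lambda$ be a row-finite $k$-graph with no sources. Suppose that we have a $\Lambda$-projective system on a measure space $(X, \mu)$ with coding maps $\{\tau^n\}_{n\in\mathbb{N}^k}$, and let $\{T_\lambda:\lambda\in\Lambda\}$ be the associated representation of $C^*(\Lambda)$ on $L^2(X, \mu)$. If the representation $\{T_\lambda:\lambda\in\Lambda\}$ is irreducible, then the coding maps $\{\tau^n\}_{n\in\mathbb{N}^k}$ are jointly ergodic with respect to $\mu$.
   Context: A $k$-graph is a countable small category $\Lambda$ with a functor $d:\Lambda\to\mathbb{N}^k$ with unique factorization ($d(\lambda)=m+n$ implies unique $\lambda=\mu\nu$, $d(\mu)=m$, $d(\nu)=n$); vertices $\Lambda^0$ are identity morphisms, $r,s$ range/source, $v\Lambda^n=\{\lambda: r(\lambda)=v, d(\lambda)=n\}$. Row-finite: $v\Lambda^n$ finite; no sources: $v\Lambda^n\ne\emptyset$. $C^*(\Lambda)$: universal $C^*$-algebra generated by partial isometries $s_\lambda$ with $\{s_v\}$ mutually orthogonal projections, $s_\lambda s_\eta=s_{\lambda\eta}$ when $s(\lambda)=r(\eta)$, $s_\lambda^*s_\lambda=s_{s(\lambda)}$, $s_v=\sum_{\lambda\in v\Lambda^n}s_\lambda s_\lambda^*$. A semibranching function system on $(X,\mu)$: measurable $D_i$ ($0<\mu(D_i)<\infty$), measurable $\sigma_i:D_i\to X$ with $R_i=\sigma_i(D_i)$ satisfying $\mu(X\setminus\bigcup R_i)=0$, $\mu(R_i\cap R_j)=0$ for $i\neq j$, $\mu(R_i)<\infty$,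 and $d(\mu\circ\sigma_i)/d\mu>0$ a.e. on $D_i$; coding map $\sigma$ with $\sigma\circ\sigma_i=\mathrm{id}_{D_i}$. A $\Lambda$-semibranching function system: sets $D_\lambda$, maps $\tau_\lambda: D_\lambda\to X$, $\tau^m:X\to X$, such that $\{\tau_\lambda:d(\lambda)=m\}$ is a semibranching function system with coding map $\tau^m$ for each $m$; $\tau_v=\mathrm{id}$; $R_\lambda=\tau_\lambda(D_\lambda)$, $R_\nu\subseteq D_\lambda$ a.e. and $\tau_\lambda\tau_\nu=\tau_{\lambda\nu}$ a.e. for $\nu\in s(\lambda)\Lambda$; $\tau^m\tau^n=\tau^{m+n}$. A $\Lambda$-projective system adds functions $f_\lambda\in L^2(X,\mu)$ with $0\ne d(\mu\circ\tau_\lambda^{-1})/d\mu=|f_\lambda|^2$ and $f_\lambda(f_\nu\circ\tau^{d(\lambda)})=f_{\lambda\nu}$; the associated representation is $T_\lambda f=f_\lambda\cdot(f\circ\tau^{d(\lambda)})$. A family of maps $\{T_i\}$ on $X$ is jointly ergodic with respect to $\mu$ if whenever $A$ is measurable with $\mu(A\,\Delta\, T_i^{-1}(A))=0$ for all $i$, then $\mu(A)=0$ or $\mu(X\setminus A)=0$. *)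

From HB Require Import structures.
From mathcomp Require Import all_boot all_order all_algebra.
From mathcomp Require Import all_classical all_reals all_analysis.
From mathcomp Require Import measurable_realfun lebesgue_integral.
From mathcomp Require Import complex.

Set Implicit Arguments.
Unset Strict Implicit.
Unset Printing Implicit Defensive.

Import Order.TTheory GRing.Theory Num.Theory.
Local Open Scope classical_set_scope.
Local Open Scope ring_scope.

Definition Nk (k : nat) := 'I_k -> nat.
Definition Nk_add (k : nat) (m n : Nk k) : Nk k := fun i => (m i + n i)%N.
Definition Nk_zero (k : nat) : Nk k := fun _ => 0%N.

(* A k-graph: a countable small category, presented through its morphisms
   (objects = identity morphisms), with source [ks], range [kr], composition
   [kcomp l m] (= l m, meaningful when ks l = kr m) and a degree functor
   [kdeg] to N^k having the unique factorization property. *)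
Record kgraph (k : nat) := KGraph {
  kmor :> Type;
  ks : kmor -> kmor;
  kr : kmor -> kmor;
  kcomp : kmor -> kmor -> kmor;
  kdeg : kmor -> Nk k;
  kg_countable : exists c : kmor -> nat, injective c;
  kg_rr : forall l, kr (kr l) = kr l;
  kg_sr : forall l, ks (kr l) = kr l;
  kg_rs : forall l, kr (ks l) = ks l;
  kg_ss : forall l, ks (ks l) = ks l;
  kg_comp_r : forall l m, ks l = kr m -> kr (kcomp l m) = kr l;
  kg_comp_s : forall l m, ks l = kr m -> ks (kcomp l m) = ks m;
  kg_assoc : forall l m n, ks l = kr m -> ks m = kr n ->
    kcomp (kcomp l m) n = kcomp l (kcomp m n);
  kg_id_r : forall l, kcomp l (ks l) = l;
  kg_id_l : forall l, kcomp (kr l) l = l;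
  kg_deg_id : forall l, kdeg (kr l) = @Nk_zero k;
  kg_deg_comp : forall l m, ks l = kr m ->
    kdeg (kcomp l m) = Nk_add (kdeg l) (kdeg m);
  kg_factor : forall l (m n : Nk k), kdeg l = Nk_add m n ->
    exists! p : kmor * kmor,
      [/\ ks p.1 = kr p.2, l = kcomp p.1 p.2, kdeg p.1 = m & kdeg p.2 = n]
}.

Arguments ks {k} _ _.
Arguments kr {k} _ _.
Arguments kcomp {k} _ _ _.
Arguments kdeg {k} _ _.

Definition is_vertex (k : nat) (L : kgraph k) (v : L) := kr L v = v.

Definition vLn (k : nat) (L : kgraph k) (v : L) (n : Nk k) : set L :=
  [set l | kr L l = v /\ kdeg L l = n].

Definition row_finite (k : nat) (L : kgraph k) :=
  forall (v : L) (n : Nk k), is_vertex v -> finite_set (vLn v n).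

Definition no_sources (k : nat) (L : kgraph k) :=
  forall (v : L) (n : Nk k), is_vertex v -> vLn v n !=set0.

Section Measure.
Context (d : measure_display) (X : measurableType d) (R : realType).
Variable mu : {measure set X -> \bar R}.

Local Open Scope ereal_scope.

Definition image_measurable (D : set X) (g : X -> X) :=
  forall A, measurable A -> A `<=` D -> measurable (g @` A).

Definition RN_deriv (nu : set X -> \bar R) (D : set X) (Phi : X -> \bar R) :=
  [/\ measurable_fun D Phi, (forall x, D x -> 0 <= Phi x) &
      forall A, measurable A -> A `<=` D -> nu A = \int[mu]_(x in A) Phi x].

Record sbfs (I : Type) (D : I -> set X) (sig : I -> X -> X) (c : X -> X)
  : Prop := SBFS {
  sbfs_D_meas : forall i, measurable (D i);
  sbfs_D_pos : forall i, 0 < mu (D i);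
  sbfs_D_fin : forall i, mu (D i) < +oo;
  sbfs_sig_meas : forall i, measurable_fun (D i) (sig i);
  sbfs_sig_img : forall i, image_measurable (D i) (sig i);
  sbfs_cover : mu (~` \bigcup_i (sig i @` D i)) = 0;
  sbfs_disj : forall i j, i <> j -> mu ((sig i @` D i) `&` (sig j @` D j)) = 0;
  sbfs_R_fin : forall i, mu (sig i @` D i) < +oo;
  sbfs_RN : forall i, exists Phi,
      RN_deriv (fun A => mu (sig i @` A)) (D i) Phi /\
      {ae mu, forall x, D i x -> 0 < Phi x};
  sbfs_code_meas : measurable_fun setT c;
  sbfs_code : forall i x, D i x -> c (sig i x) = x
}.

Definition cre (z : R[i]) : R := let: Complex a _ := z in a.
Definition cim (z : R[i]) : R := let: Complex _ b := z in b.
Definition csq (z : R[i]) : R := (cre z ^+ 2 + cim z ^+ 2)%R.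

Definition cmeasurable (f : X -> R[i]) :=
  measurable_fun setT (fun x => cre (f x)) /\
  measurable_fun setT (fun x => cim (f x)).

Definition L2 (f : X -> R[i]) :=
  cmeasurable f /\ \int[mu]_x (csq (f x))%:E < +oo.

Definition ae_eq (f g : X -> R[i]) := {ae mu, forall x, f x = g x}.

Definition cinner (f g : X -> R[i]) : R[i] :=
  Complex (Rintegral mu setT (fun x => cre (f x * conjc (g x))%R))
          (Rintegral mu setT (fun x => cim (f x * conjc (g x))%R)).

(* closed subspaces of L^2(X, mu) (as sets of functions, saturated for a.e.
   equality) *)
Record closed_subspace (V : set (X -> R[i])) : Prop := ClosedSubspace {
  cs_L2 : V `<=` L2;
  cs_ae : forall f g, V f -> L2 g -> ae_eq f g -> V g;
  cs_0 : V (fun _ => 0%R);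
  cs_add : forall f g, V f -> V g -> V (fun x => f x + g x)%R;
  cs_scale : forall (a : R[i]) f, V f -> V (fun x => a * f x)%R;
  cs_closed : forall (F : nat -> X -> R[i]) g, (forall n, V (F n)) -> L2 g ->
      (fun n => \int[mu]_x (csq (F n x - g x)%R)%:E) @ \oo --> 0 -> V g
}.

Definition invariant (V : set (X -> R[i])) (T : (X -> R[i]) -> X -> R[i]) :=
  forall f, V f -> V (T f).

(* V is invariant under the adjoint T^* : for every g in V, T^* g lies in V,
   T^* g being the h with <T f, g> = <f, h> for all f in L^2 *)
Definition adj_invariant (V : set (X -> R[i])) (T : (X -> R[i]) -> X -> R[i]) :=
  forall g, V g -> exists2 h, V h & forall f, L2 f -> cinner (T f) g = cinner f h.

Definition irreducible (Lam : Type) (T : Lam -> (X -> R[i]) -> X -> R[i]) :=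
  forall V, closed_subspace V ->
    (forall l, invariant V (T l) /\ adj_invariant V (T l)) ->
    (forall f, V f -> ae_eq f (fun _ => 0%R)) \/ (forall f, L2 f -> V f).

Definition jointly_ergodic (J : Type) (t : J -> X -> X) :=
  forall A, measurable A ->
    (forall j, mu ((A `\` t j @^-1` A) `|` (t j @^-1` A `\` A)) = 0) ->
    mu A = 0 \/ mu (~` A) = 0.

Record Lsbfs (k : nat) (L : kgraph k) (D : L -> set X) (tau : L -> X -> X)
  (code : Nk k -> X -> X) : Prop := LSBFS {
  Lsbfs_sbfs : forall m : Nk k,
    @sbfs {l : L | kdeg L l = m} (fun l => D (sval l)) (fun l => tau (sval l))
      (code m);
  Lsbfs_vertex : forall (v : L) x, is_vertex v -> D v x -> tau v x = x;
  Lsbfs_range : forall l n : L, ks L l = kr L n ->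
    mu ((tau n @` D n) `\` D l) = 0;
  (* tau_l tau_n = tau_{l n} a.e., as partial maps *)
  Lsbfs_dom : forall l n : L, ks L l = kr L n ->
    {ae mu, forall x, D (kcomp L l n) x <-> D n x};
  Lsbfs_comp : forall l n : L, ks L l = kr L n ->
    {ae mu, forall x, D n x -> tau l (tau n x) = tau (kcomp L l n) x};
  Lsbfs_code : forall m n : Nk k, code m \o code n = code (Nk_add m n)
}.

Record Lprojective (k : nat) (L : kgraph k) (D : L -> set X)
  (tau : L -> X -> X) (code : Nk k -> X -> X) (f : L -> X -> R[i]) : Prop :=
  LPROJ {
  Lproj_sbfs : Lsbfs D tau code;
  Lproj_L2 : forall l, L2 (f l);
  Lproj_nonzero : forall l, ~ ae_eq (f l) (fun _ => 0%R);
  Lproj_RN : forall l, exists Phi,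
    RN_deriv (fun A => mu (tau l @^-1` A `&` D l)) setT Phi /\
    {ae mu, forall x, Phi x = (csq (f l x))%:E};
  Lproj_mult : forall l n : L, ks L l = kr L n ->
    ae_eq (fun x => f l x * f n (code (kdeg L l) x))%R (f (kcomp L l n))
}.

End Measure.

Definition proj_rep (k : nat) (L : kgraph k) (X : Type) (R : rcfType)
  (code : Nk k -> X -> X) (f : L -> X -> R[i]) (l : L) (g : X -> R[i]) :
  X -> R[i] := fun x => (f l x * g (code (kdeg L l) x))%R.

(* Let A be measurable with (tau^n)^-1(A) = A up to null sets for every n,
   and let V be the closed subspace of L^2 of the functions vanishing off A.
   The density |f_l|^2 makes tau^(d l) pull null sets back to null sets on
   the support of f_l, so V is invariant under T_l g = f_l (g o tau^(d l)).
   The map tau_l pulls null sets back to null sets and tau^(d l) o tau_l = id,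
   so V is also invariant under the adjoint T_l^* g = 1_(D_l) (g / f_l) o tau_l.
   By irreducibility V = 0 or V = L^2. As the ranges R_l with d l = 0 form a
   countable cover of X by sets of finite measure, testing V on indicators of
   finite-measure subsets of A, resp. of its complement, shows that A or its
   complement is null. *)

From Pilot Require Import Defs.
From HB Require Import structures.
From mathcomp Require Import all_boot all_order all_algebra.
From mathcomp Require Import all_classical all_reals all_analysis.
From mathcomp Require Import measurable_realfun lebesgue_integral.
From mathcomp Require Import complex.
From mathcomp Require Import ring.
(* Defs' [invariant] and [ae_eq] must shadow their namesakes in mathcomp. *)
Import Defs.

Set Implicit Arguments.
Unset Strict Implicit.
Unset Printing Implicit Defensive.
Import Order.TTheory GRing.Theory Num.Theory.
Import numFieldNormedType.Exports.
Local Open Scope classical_set_scope.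
Local Open Scope ring_scope.

Lemma measurable_inv (R : realType) : measurable_fun setT (@GRing.inv R).
Proof.
have m0 : measurable [set x : R | x != 0].
  rewrite (_ : [set x : R | x != 0] = ~` [set 0]); first exact: measurableC.
  by apply/seteqP; split => x /= /eqP.
have -> : [set: R] = [set x | x != 0] `|` [set 0].
  by apply/seteqP; split => x //= _; case: (eqVneq x 0) => x0; [right|left].
apply/measurable_funU => //; split; last exact: measurable_fun_set1.
apply: subspace_continuous_measurable_fun => //.
have inv_cont : {in [set x : R | x != 0], continuous (@GRing.inv R)}.
  by move=> x /set_mem x0; exact: inv_continuous.
exact: continuous_in_subspaceT inv_cont.
Qed.

Section ComplexParts.
Local Open Scope complex_scope.
Variable R : realType.
Implicit Types a b z : R[i].

Lemma creD a b : cre (a + b) = cre a + cre b.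
Proof. by case: a; case: b. Qed.
Lemma cimD a b : cim (a + b) = cim a + cim b.
Proof. by case: a; case: b. Qed.
Lemma creN a : cre (- a) = - cre a. Proof. by case: a. Qed.
Lemma cimN a : cim (- a) = - cim a. Proof. by case: a. Qed.
Lemma creM a b : cre (a * b) = cre a * cre b - cim a * cim b.
Proof. by case: a; case: b. Qed.
Lemma cimM a b : cim (a * b) = cre a * cim b + cim a * cre b.
Proof. by case: a => ? ?; case: b => ? ? /=; rewrite addrC. Qed.
Lemma creJ a : cre (conjc a) = cre a. Proof. by case: a. Qed.
Lemma cimJ a : cim (conjc a) = - cim a. Proof. by case: a. Qed.
Lemma conjcM a b : conjc (a * b) = conjc a * conjc b.
Proof. by case: a => x y; case: b => u v /=; congr Complex; ring. Qed.
Lemma cre_realM (r : R) a : cre (r%:C * a) = r * cre a.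
Proof. by case: a => ? ? /=; rewrite mul0r subr0. Qed.
Lemma cim_realM (r : R) a : cim (r%:C * a) = r * cim a.
Proof. by case: a => ? ? /=; rewrite mul0r addr0. Qed.

Lemma csq_ge0 z : 0 <= csq z.
Proof. by rewrite addr_ge0 ?sqr_ge0. Qed.
Lemma csq0 : csq (0 : R[i]) = 0.
Proof. by rewrite /csq /= expr0n /= addr0. Qed.
Lemma csq_eq0 z : csq z = 0 -> z = 0.
Proof.
case: z => x y; rewrite /csq /= => /eqP; rewrite paddr_eq0 ?sqr_ge0// !sqrf_eq0.
by case/andP => /eqP -> /eqP ->.
Qed.
Lemma csqN z : csq (- z) = csq z.
Proof. by rewrite /csq creN cimN !sqrrN. Qed.
Lemma csqJ z : csq (conjc z) = csq z.
Proof. by rewrite /csq creJ cimJ sqrrN. Qed.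
Lemma csqM a b : csq (a * b) = csq a * csq b.
Proof. rewrite /csq creM cimM; case: a => x y; case: b => u v /=; ring. Qed.
Lemma csq_realM (r : R) z : csq (r%:C * z) = r ^+ 2 * csq z.
Proof. by rewrite /csq cre_realM cim_realM !exprMn mulrDr. Qed.
Lemma csqD_le a b : csq (a + b) <= 2 * (csq a + csq b).
Proof.
rewrite /csq creD cimD -subr_ge0; case: a => x y; case: b => u v /=.
have -> : 2 * (x ^+ 2 + y ^+ 2 + (u ^+ 2 + v ^+ 2))
           - ((x + u) ^+ 2 + (y + v) ^+ 2) = (x - u) ^+ 2 + (y - v) ^+ 2.
  by ring.
by rewrite addr_ge0 ?sqr_ge0.
Qed.

End ComplexParts.

Section ComplexMeasurable.
Local Open Scope complex_scope.
Context d (X : measurableType d) (R : realType).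
Implicit Types f g : X -> R[i].

Lemma measurable_csq f :
  cmeasurable f -> measurable_fun setT (fun x => csq (f x)).
Proof. by case=> f1 f2; apply: measurable_funD; apply: measurable_funX. Qed.

Lemma cmeasurable_real (r : X -> R) : measurable_fun setT r ->
  cmeasurable (fun x => (r x)%:C).
Proof. by []. Qed.

Lemma cmeasurableD f g : cmeasurable f -> cmeasurable g ->
  cmeasurable (fun x => f x + g x).
Proof.
case=> f1 f2 [g1 g2]; split.
- by under eq_fun do rewrite creD; apply: measurable_funD.
- by under eq_fun do rewrite cimD; apply: measurable_funD.
Qed.

Lemma cmeasurableN f : cmeasurable f -> cmeasurable (fun x => - f x).
Proof.
case=> f1 f2; split.
- by under eq_fun do rewrite creN; apply: measurable_funN.
- by under eq_fun do rewrite cimN; apply: measurable_funN.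
Qed.

Lemma cmeasurableM f g : cmeasurable f -> cmeasurable g ->
  cmeasurable (fun x => f x * g x).
Proof.
case=> f1 f2 [g1 g2]; split.
- under eq_fun do rewrite creM.
  by apply: measurable_funB; apply: measurable_funM.
- under eq_fun do rewrite cimM.
  by apply: measurable_funD; apply: measurable_funM.
Qed.

Lemma cmeasurableJ f : cmeasurable f -> cmeasurable (fun x => conjc (f x)).
Proof.
case=> f1 f2; split; first by under eq_fun do rewrite creJ.
by under eq_fun do rewrite cimJ; apply: measurable_funN.
Qed.

Lemma cmeasurable_comp f (c : X -> X) : measurable_fun setT c -> cmeasurable f ->
  cmeasurable (f \o c).
Proof.
move=> mc [f1 f2].
by split; [exact: measurableT_comp f1 mc|exact: measurableT_comp f2 mc].
Qed.

End ComplexMeasurable.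

Definition cindic {R : realType} {T : Type} (S : set T) (x : T) : R[i] :=
  ((\1_S x : R)%:C)%C.

Section L2Space.
Local Open Scope ereal_scope.
Context d (X : measurableType d) (R : realType) (mu : {measure set X -> \bar R}).
Implicit Types f g : X -> R[i].

Let measurable_csqE f : cmeasurable f ->
  measurable_fun setT (fun x => (csq (f x))%:E).
Proof. by move=> mf; exact/measurable_EFinP/measurable_csq. Qed.

Lemma L2_0 : L2 mu (fun _ => 0%R).
Proof.
split=> //; rewrite (eq_integral (cst 0)) ?integral0// => x _.
by rewrite csq0.
Qed.

Lemma L2D f g : L2 mu f -> L2 mu g -> L2 mu (fun x => f x + g x)%R.
Proof.
case=> mf If [mg Ig]; split; first exact: cmeasurableD.
apply: (@le_lt_trans _ _ (\int[mu]_x (2%:E * ((csq (f x))%:E + (csq (g x))%:E)))).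
  apply: ge0_le_integral => //.
  - by move=> x _; rewrite lee_fin csq_ge0.
  - exact/measurable_csqE/cmeasurableD.
  - apply: emeasurable_funM => //.
    by apply: emeasurable_funD; exact: measurable_csqE.
  - by move=> x _; rewrite -EFinD -EFinM lee_fin csqD_le.
have sum_ge0 x : 0 <= (csq (f x))%:E + (csq (g x))%:E.
  by rewrite adde_ge0// lee_fin csq_ge0.
rewrite ge0_integralZl//; last by apply: emeasurable_funD; exact: measurable_csqE.
rewrite ge0_integralD//; try exact: measurable_csqE;
  try by move=> x _; rewrite lee_fin csq_ge0.
by rewrite lte_mul_pinfty// ?lee_fin// lte_add_pinfty.
Qed.

Lemma L2Z (a : R[i]) f : L2 mu f -> L2 mu (fun x => a * f x)%R.
Proof.
case=> mf If; split; first exact: cmeasurableM.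
under eq_integral do rewrite csqM EFinM.
rewrite ge0_integralZl//; last 3 first.
- exact: measurable_csqE.
- by move=> x _; rewrite lee_fin csq_ge0.
- by rewrite lee_fin csq_ge0.
by rewrite lte_mul_pinfty// lee_fin csq_ge0.
Qed.

Lemma ae_csq_eq0 M f : measurable M -> cmeasurable f ->
  \int[mu]_(x in M) (csq (f x))%:E = 0 -> {ae mu, forall x, M x -> f x = 0%R}.
Proof.
move=> mM mf int0.
have /(ae_eq_integral_abs mu mM) : \int[mu]_(x in M) `|(csq (f x))%:E| = 0.
  by rewrite -int0; apply: eq_integral => x _; rewrite gee0_abs// lee_fin csq_ge0.
move=> /(_ (measurable_funTS (measurable_csqE mf))).
by apply: filterS => x csq0 Mx; apply: csq_eq0; case: (csq0 Mx).
Qed.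

Lemma ae_not_measure0 E : measurable E -> mu E = 0 -> {ae mu, forall x, ~ E x}.
Proof. by move=> mE E0; exists E; split => // x /= /contrapT. Qed.

Lemma cindic_L2 S : measurable S -> mu S < +oo -> L2 mu (cindic S).
Proof.
move=> mS Sfin; split; first exact/cmeasurable_real/measurable_indic.
rewrite (eq_integral (fun x => (\1_S x)%:E)) ?integral_indic ?setIT// => x _.
rewrite /csq /= expr0n /= addr0 indicE.
by case: (x \in S); rewrite ?expr1n ?expr0n.
Qed.

Lemma cindic_ae_eq0 S : measurable S ->
  {ae mu, forall x, S x -> cindic S x = 0%R :> R[i]} -> mu S = 0.
Proof.
move=> mS [N [mN N0 SN]]; apply: measure_negligible => //.
exists N; split => // x Sx; apply: SN => /(_ Sx) /eqP.
by rewrite /cindic indicE mem_set// eq_complex/= oner_eq0.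
Qed.

End L2Space.

Section SupportedFunctions.
Local Open Scope ereal_scope.
Context d (X : measurableType d) (R : realType) (mu : {measure set X -> \bar R}).
Variables (A : set X) (mA : measurable A).

Definition L2_on (g : X -> R[i]) :=
  L2 mu g /\ {ae mu, forall x, ~ A x -> g x = 0%R}.

Lemma L2_on_closed_under_limits (F : nat -> X -> R[i]) g :
  (forall n, L2_on (F n)) -> L2 mu g ->
  (fun n => \int[mu]_x (csq (F n x - g x)%R)%:E) @ \oo --> 0 -> L2_on g.
Proof.
move=> LF [mg Ig] cvgF; split => //.
have mFg n : cmeasurable (fun x => F n x - g x)%R.
  by apply: cmeasurableD; [exact: (LF n).1.1|exact: cmeasurableN].
have mAc : measurable (~` A) by exact: measurableC.
set I := \int[mu]_(x in ~` A) (csq (g x))%:E.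
have I_le n : I <= \int[mu]_x (csq (F n x - g x)%R)%:E.
  have -> : I = \int[mu]_(x in ~` A) (csq (F n x - g x)%R)%:E.
    apply: ae_eq_integral => //.
    - exact/measurable_funTS/measurable_EFinP/measurable_csq.
    - exact/measurable_funTS/measurable_EFinP/measurable_csq.
    - by apply: filterS (LF n).2 => x Fn0 nA; rewrite Fn0// sub0r csqN.
  apply: ge0_subset_integral => //.
  - exact/measurable_EFinP/measurable_csq.
  - by move=> x _; rewrite lee_fin csq_ge0.
have I0 : I = 0.
  apply/eqP; rewrite eq_le integral_ge0 ?andbT; last first.
    by move=> x _; rewrite lee_fin csq_ge0.
  by apply: (cvge_to_ge cvgF); apply: nearW => n; exact: I_le.
by apply: filterS (ae_csq_eq0 mAc mg I0) => x gx0 /gx0.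
Qed.

Lemma closed_subspace_L2_on : closed_subspace mu L2_on.
Proof.
split.
- by move=> g [].
- move=> g h [Lg g0] Lh gh; split => //.
  by apply: filterS2 g0 gh => x g0 gh nA; rewrite -gh g0.
- by split; [exact: L2_0|exact: aeW].
- move=> g h [Lg g0] [Lh h0]; split; first exact: L2D.
  by apply: filterS2 g0 h0 => x g0 h0 nA; rewrite g0 ?h0 ?addr0.
- move=> a g [Lg g0]; split; first exact: L2Z.
  by apply: filterS g0 => x g0 nA; rewrite g0 ?mulr0.
- exact: L2_on_closed_under_limits.
Qed.

End SupportedFunctions.

Lemma negligible_countable_bigcup d (T : sigmaRingType d) (R : realFieldType)
    (mu : {measure set T -> \bar R}) I (F : I -> set T) :
  countable [set: I] -> (forall i, mu.-negligible (F i)) ->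
  mu.-negligible (\bigcup_i F i).
Proof.
elim/Ppointed: I => I in F *.
  by rewrite empty_eq0 bigcup0// => *; exact: negligible_set0.
move=> /countable_bijP[B] /ppcard_eqP[e] Fnull.
rewrite (reindex_bigcup e^-1%FUN setT)//=; first exact: negligible_bigcup.
exact: (@subl_surj _ _ B).
Qed.

Section SemibranchingNull.
Local Open Scope ereal_scope.
Context d (X : measurableType d) (R : realType) (mu : {measure set X -> \bar R}).
Variables (I : Type) (D : I -> set X) (sig : I -> X -> X) (c : X -> X).
Hypotheses (S : sbfs mu D sig c) (countable_I : countable [set: I]).

Lemma sbfs_measure0_of_finite_subsets B : measurable B ->
  (forall A, measurable A -> A `<=` B -> mu A < +oo -> mu A = 0) -> mu B = 0.
Proof.
move=> mB finite0.
have mR i : measurable (sig i @` D i).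
  exact: (sbfs_sig_img S (i:=i) (sbfs_D_meas S i) (@subset_refl _ _)).
apply: measure_negligible => //.
apply: (@negligibleS _ _ _ _ ((~` \bigcup_i sig i @` D i) `|`
                              \bigcup_i (B `&` sig i @` D i))).
  move=> x Bx; have [[i _ Rx]|] := pselect ((\bigcup_i sig i @` D i) x).
    by right; exists i.
  by left.
apply: negligibleU.
  apply/negligibleP; last exact: sbfs_cover S.
  exact/measurableC/countable_bigcupT_measurable.
apply: negligible_countable_bigcup => // i.
have mBR : measurable (B `&` sig i @` D i) by exact: measurableI.
apply/negligibleP => //; apply: finite0 => //.
apply: le_lt_trans (sbfs_R_fin S i).
by apply: le_measure; rewrite ?inE //; exact: subIsetr.
Qed.

Variables (A : set X) (mA : measurable A).

Lemma L2_on_trivial_measure0 :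
  (forall g, L2_on mu A g -> ae_eq mu g (fun _ => 0%R)) -> mu A = 0.
Proof.
move=> V0; apply: sbfs_measure0_of_finite_subsets => // B mB BA Bfin.
apply: cindic_ae_eq0 => //.
have /V0 : L2_on mu A (cindic B).
  split; first exact: cindic_L2.
  by apply: aeW => x nA; rewrite /cindic indicE memNset// => /BA.
by apply: filterS => x ->.
Qed.

Lemma L2_on_full_measureC0 : (forall g, L2 mu g -> L2_on mu A g) -> mu (~` A) = 0.
Proof.
move=> full; apply: sbfs_measure0_of_finite_subsets; first exact: measurableC.
move=> B mB BnA Bfin; apply: cindic_ae_eq0 => //.
by apply: filterS (full _ (cindic_L2 mB Bfin)).2 => x + /BnA; apply.
Qed.

End SemibranchingNull.

Section IntegralTransfer.
Local Open Scope ereal_scope.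
Context d (X : measurableType d) (R : realType) (mu : {measure set X -> \bar R}).
Variables (D : set X) (t : X -> X) (q : X -> R).
Hypotheses (mD : measurable D) (mt : measurable_fun D t).
Hypotheses (q_ge0 : forall x, (0 <= q x)%R) (mq : measurable_fun setT q).
Hypothesis preimage_density : forall B, measurable B ->
  mu (t @^-1` B `&` D) = \int[mu]_(x in B) (q x)%:E.

Import HBNNSimple.

Lemma nnsfun_integral_transfer (h : {nnsfun X >-> R}) :
  \int[mu]_x ((h x)%:E * (q x)%:E) = \int[mu]_(y in D) (h (t y))%:E.
Proof.
have mS r : measurable (h @^-1` [set r]).
  by rewrite -(setTI (_ @^-1` _)); exact: measurable_funP.
have mtS r : measurable (D `&` t @^-1` (h @^-1` [set r])) by exact: mt.
transitivity (\sum_(r \in range h) r%:E * mu (t @^-1` (h @^-1` [set r]) `&` D)).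
  have -> : (fun x => (h x)%:E * (q x)%:E) = (fun x => \sum_(r \in range h)
      (r * \1_(h @^-1` [set r]) x)%:E * (q x)%:E).
    apply/funext => x; rewrite fimfunE -fsumEFin// ge0_mule_fsuml//.
    by move=> r; exact: nnfun_muleindic_ge0.
  rewrite ge0_integral_fsum//; last 2 first.
  - move=> r; apply: emeasurable_funM; last exact/measurable_EFinP.
    exact/measurable_EFinP/measurable_funM.
  - by move=> r x _; rewrite mule_ge0 ?nnfun_muleindic_ge0 ?lee_fin.
  apply: eq_fsbigr => r /[!inE] -[x _ <-].
  under eq_integral do rewrite EFinM -muleA.
  rewrite ge0_integralZl//; last 3 first.
  - apply: emeasurable_funM; exact/measurable_EFinP.
  - by move=> y _; rewrite mule_ge0 ?lee_fin.
  - by rewrite lee_fin.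
  congr (_ * _); rewrite preimage_density// [RHS]integral_mkcond.
  by apply: eq_integral => y _; rewrite epatch_indic /= muleC.
transitivity (\sum_(r \in range h)
    \int[mu]_(y in D) (r * \1_(D `&` t @^-1` (h @^-1` [set r])) y)%:E).
  apply: eq_fsbigr => r /[!inE] -[x _ <-].
  rewrite (@integralZl_indic _ _ _ _ _ mD
    (fun r => D `&` t @^-1` (h @^-1` [set r])))//; last first.
    by move=> r0; rewrite preimage_nnfun0// preimage_set0 setI0.
  by rewrite integral_indic// setIAC setIid setIC.
rewrite -ge0_integral_fsum//; last 2 first.
- by move=> r; exact/measurable_EFinP/measurable_funM.
- move=> r y _; rewrite lee_fin indicE.
  by case: (boolP (y \in _)) => [/set_mem [_ <-]|_]; rewrite ?mulr1 ?mulr0.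
apply: eq_integral => y /[!inE] Dy; rewrite fsumEFin// fimfunE; congr EFin.
apply: eq_fsbigr => r _; congr (_ * _)%R; rewrite !indicE; congr (_ : R).
by rewrite in_setI (mem_set Dy).
Qed.

Lemma ge0_integral_transfer (G : X -> \bar R) :
  measurable_fun setT G -> (forall x, 0 <= G x) ->
  \int[mu]_x (G x * (q x)%:E) = \int[mu]_(y in D) G (t y).
Proof.
move=> mG G0.
pose h := nnsfun_approx measurableT mG.
have h_cvg x : EFin \o h^~ x @ \oo --> G x by exact: cvg_nnsfun_approx.
have h_nd x : {homo h^~ x : m n / (m <= n)%N >-> (m <= n)%R}.
  by move=> m n mn; exact/lefP/nd_nnsfun_approx.
transitivity (limn (fun n => \int[mu]_x ((h n x)%:E * (q x)%:E))).
  have GE x : G x * (q x)%:E = limn (fun n => (h n x)%:E * (q x)%:E).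
    by apply/esym/cvg_lim => //; apply: cvgeZr => //; exact: h_cvg.
  under eq_integral do rewrite GE.
  apply: monotone_convergence => //.
  - move=> n; apply: emeasurable_funM; exact/measurable_EFinP.
  - by move=> n x _; rewrite mule_ge0 ?lee_fin.
  - by move=> x _ m n mn; rewrite lee_wpmul2r ?lee_fin ?h_nd.
transitivity (limn (fun n => \int[mu]_(y in D) (h n (t y))%:E)).
  by congr (limn _); apply/funext => n; exact: nnsfun_integral_transfer.
have GE y : G (t y) = limn (fun n => (h n (t y))%:E).
  by apply/esym/cvg_lim => //; exact: h_cvg.
under [RHS]eq_integral do rewrite GE.
apply/esym; apply: monotone_convergence => //.
- by move=> n; do 2 apply: measurableT_comp => //.
- by move=> n x _; rewrite lee_fin.
- by move=> x _ m n mn; rewrite lee_fin h_nd.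
Qed.

Lemma integral_transfer (G : X -> R) : measurable_fun setT G ->
  \int[mu]_x (G x * q x)%:E = \int[mu]_(y in D) (G (t y))%:E.
Proof.
move=> mG; have mGE : measurable_fun setT (EFin \o G) by exact/measurable_EFinP.
rewrite integralE [RHS]integralE; congr (_ - _).
- rewrite [RHS](eq_integral (fun y => (EFin \o G)^\+ (t y))); last first.
    by move=> y _; rewrite !funeposE.
  rewrite -(ge0_integral_transfer (measurable_funepos mGE));
    last exact: funepos_ge0.
  apply: eq_integral => x _; rewrite !funeposE /= EFinM maxe_pMl ?mul0e//.
  by rewrite lee_fin.
- rewrite [RHS](eq_integral (fun y => (EFin \o G)^\- (t y))); last first.
    by move=> y _; rewrite !funenegE.
  rewrite -(ge0_integral_transfer (measurable_funeneg mGE));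
    last exact: funeneg_ge0.
  apply: eq_integral => x _; rewrite !funenegE /= -mulNr EFinM maxe_pMl ?mul0e//.
  by rewrite lee_fin.
Qed.

End IntegralTransfer.

Lemma countable_kdeg k (L : kgraph k) (m : Nk k) :
  countable [set: {l : L | kdeg L l = m}].
Proof.
have [c c_inj] := kg_countable L.
apply/countable_injP; exists (c \o sval) => l l' _ _ /c_inj.
exact: eq_sig_hprop.
Qed.

Section ProjectiveRepresentation.
Local Open Scope ereal_scope.
Context k (L : kgraph k) d (X : measurableType d) (R : realType)
  (mu : {measure set X -> \bar R})
  (D : L -> set X) (tau : L -> X -> X) (code : Nk k -> X -> X)
  (f : L -> X -> R[i]).
Hypothesis HP : Lprojective mu D tau code f.

Let S m := Lsbfs_sbfs (Lproj_sbfs HP) m.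
Let idx (l : L) : {l0 : L | kdeg L l0 = kdeg L l} := exist _ l erefl.

Let measurable_code m : measurable_fun setT (code m).
Proof. exact: sbfs_code_meas (S m). Qed.

Let measurable_D l : measurable (D l).
Proof. exact: (sbfs_D_meas (S (kdeg L l)) (idx l)). Qed.

Let measurable_tau l : measurable_fun (D l) (tau l).
Proof. exact: (sbfs_sig_meas (S (kdeg L l)) (i := idx l)). Qed.

Let code_tau l x : D l x -> code (kdeg L l) (tau l x) = x.
Proof. exact: (sbfs_code (S (kdeg L l)) (i := idx l)). Qed.

Let measurable_weight l : measurable_fun setT (fun x => csq (f l x)).
Proof. exact: measurable_csq (Lproj_L2 HP l).1. Qed.

Let weight_ge0 l x : (0 <= csq (f l x))%R.
Proof. exact: csq_ge0. Qed.

Lemma preimage_tau_density l B : measurable B ->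
  mu (tau l @^-1` B `&` D l) = \int[mu]_(x in B) (csq (f l x))%:E.
Proof.
move=> mB; have [Phi [[mPhi _ PhiE] Phi_ae]] := Lproj_RN HP l.
rewrite PhiE//; apply: ae_eq_integral => //.
- exact: measurable_funS mPhi.
- exact/measurable_funTS/measurable_EFinP.
- by apply: filterS Phi_ae => x ->.
Qed.

Lemma integral_weight_tau l (G : X -> R) : measurable_fun setT G ->
  \int[mu]_x (G x * csq (f l x))%:E = \int[mu]_(y in D l) (G (tau l y))%:E.
Proof.
exact: (@integral_transfer _ _ _ mu (D l) (tau l) (fun x => csq (f l x))
  (measurable_D l) (@measurable_tau l) (weight_ge0 l) (measurable_weight l)
  (@preimage_tau_density l)).
Qed.

Lemma ae_tau_pullback l (P : X -> Prop) :
  {ae mu, forall x, P x} -> {ae mu, forall y, D l y -> P (tau l y)}.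
Proof.
case=> N [mN N0 PN]; exists (D l `&` tau l @^-1` N); split.
- exact: measurable_tau.
- rewrite setIC preimage_tau_density// null_set_integral//.
  exact/measurable_funTS/measurable_EFinP.
- by move=> y /= /not_implyP[Dy nP]; split => //; apply: PN.
Qed.

Lemma ae_code_pullback l (P : X -> Prop) : {ae mu, forall x, P x} ->
  {ae mu, forall x, f l x <> 0%R -> P (code (kdeg L l) x)}.
Proof.
case=> N [mN N0 PN]; set c := code (kdeg L l).
have mcN : measurable (c @^-1` N).
  by rewrite -[Y in measurable Y]setTI; exact: measurable_code.
have : \int[mu]_(x in c @^-1` N) (csq (f l x))%:E = 0.
  rewrite integral_mkcond.
  transitivity (\int[mu]_x (\1_(c @^-1` N) x * csq (f l x))%:E).
    by apply: eq_integral => x _; rewrite epatch_indic /= EFinM muleC.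
  rewrite integral_weight_tau; last exact: measurable_indic.
  transitivity (\int[mu]_(y in D l) (\1_N y)%:E).
    apply: eq_integral => y /set_mem Dy.
    by rewrite !indicE -[in RHS](code_tau Dy).
  rewrite integral_indic//; apply: subset_measure0 N0 => //.
  exact: measurableI.
move=> /(ae_csq_eq0 mcN (Lproj_L2 HP l).1).
by apply: filterS => x fc fx0; apply: contrapT => nP; apply/fx0/fc/PN.
Qed.

Lemma proj_rep_L2 l g : L2 mu g -> L2 mu (proj_rep code f l g).
Proof.
case=> mg Ig; set c := code (kdeg L l).
have mgc : cmeasurable (g \o c) by exact: cmeasurable_comp (measurable_code _) mg.
split; first exact: cmeasurableM (Lproj_L2 HP l).1 mgc.
rewrite (eq_integral (fun x => (csq (g (c x)) * csq (f l x))%:E)); last first.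
  by move=> x _; rewrite /proj_rep csqM mulrC.
rewrite integral_weight_tau; last exact: measurable_csq.
rewrite (eq_integral (fun y => (csq (g y))%:E)); last first.
  by move=> y /set_mem Dy; rewrite /c code_tau.
apply: le_lt_trans Ig; apply: ge0_subset_integral => //.
- exact/measurable_EFinP/measurable_csq.
- by move=> x _; rewrite lee_fin csq_ge0.
Qed.

Variables (A : set X) (mA : measurable A).

Let measurable_code_preimage m : measurable (code m @^-1` A).
Proof. by rewrite -[Y in measurable Y]setTI; exact: measurable_code. Qed.

Lemma proj_rep_invariant l : mu (code (kdeg L l) @^-1` A `\` A) = 0 ->
  invariant (L2_on mu A) (proj_rep code f l).
Proof.
move=> null_pre g [Lg g0]; split; first exact: proj_rep_L2.
have := ae_not_measure0 (measurableD (measurable_code_preimage _) mA) null_pre.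
apply: filterS2 (ae_code_pullback l g0) => x gc0 pre nA.
rewrite /proj_rep; have [->|fx0] := eqVneq (f l x) 0%R; first by rewrite mul0r.
have nAc : ~ A (code (kdeg L l) x) by move=> cA; apply: pre.
by rewrite gc0 ?mulr0//; exact/eqP.
Qed.

Local Open Scope complex_scope.

(* [proj_adj l] is the adjoint of [proj_rep code f l]: it is [(g / f l) \o tau l]
   on [D l] and [0] elsewhere, with [1 / f l] written
   [conjc (f l) / csq (f l)]. *)
Definition adj_kernel l (g : X -> R[i]) x : R[i] :=
  (((csq (f l x))^-1)%:C * (g x * conjc (f l x)))%R.

Definition proj_adj l (g : X -> R[i]) y : R[i] :=
  if y \in D l then adj_kernel l g (tau l y) else 0%R.

Lemma cmeasurable_proj_adj l g : cmeasurable g -> cmeasurable (proj_adj l g).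
Proof.
move=> mg; have [k1 k2] : cmeasurable (adj_kernel l g).
  apply: cmeasurableM; last exact/cmeasurableM/cmeasurableJ/(Lproj_L2 HP l).1.
  apply: cmeasurable_real.
  exact: measurableT_comp (@measurable_inv R) (measurable_weight l).
have /(measurable_restrictT _ (measurable_D l)) mre :=
  measurableT_comp k1 (@measurable_tau l).
have /(measurable_restrictT _ (measurable_D l)) mim :=
  measurableT_comp k2 (@measurable_tau l).
by split; [move: mre|move: mim]; apply: eq_measurable_fun => y _;
  rewrite /proj_adj patchE; case: ifP.
Qed.

Lemma csq_adj_kernel l g x : csq (adj_kernel l g x) = (csq (g x) / csq (f l x))%R.
Proof.
rewrite /adj_kernel csq_realM csqM csqJ.
have [->|fx0] := eqVneq (csq (f l x)) 0%R.
  by rewrite invr0 expr0n /= !mul0r mulr0.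
by rewrite expr2 mulrCA -!mulrA mulVf // mulr1 mulrC.
Qed.

Lemma proj_adj_L2 l g : L2 mu g -> L2 mu (proj_adj l g).
Proof.
case=> mg Ig; split; first exact: cmeasurable_proj_adj.
set G := fun x => (csq (g x) / csq (f l x))%R.
have mG : measurable_fun setT G.
  apply: measurable_funM; first exact: measurable_csq.
  exact: measurableT_comp (@measurable_inv R) (measurable_weight l).
have -> : \int[mu]_x (csq (proj_adj l g x))%:E =
           \int[mu]_(y in D l) (G (tau l y))%:E.
  rewrite [RHS]integral_mkcond; apply: eq_integral => y _.
  by rewrite /proj_adj patchE; case: ifP => _; rewrite ?csq_adj_kernel ?csq0.
rewrite -integral_weight_tau//; apply: le_lt_trans Ig.
apply: ge0_le_integral => //.
- by move=> x _; rewrite lee_fin mulr_ge0 ?divr_ge0 ?csq_ge0.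
- exact/measurable_EFinP/measurable_funM.
- exact/measurable_EFinP/measurable_csq.
- move=> x _; rewrite lee_fin /G -mulrA.
  have [->|fx0] := eqVneq (csq (f l x)) 0%R; first by rewrite !mulr0 csq_ge0.
  by rewrite mulVf // mulr1.
Qed.

Lemma proj_adj_integral l g h (p : R[i] -> R) :
  (forall (r : R) z, p (r%:C * z)%R = (r * p z)%R) ->
  (forall F : X -> R[i],
     cmeasurable F -> measurable_fun setT (fun x => p (F x))) ->
  cmeasurable g -> cmeasurable h ->
  (\int[mu]_x (p (proj_rep code f l h x * conjc (g x))%R)%:E =
   \int[mu]_x (p (h x * conjc (proj_adj l g x))%R)%:E)%E.
Proof.
move=> pZ mp mg mh; set c := code (kdeg L l).
have p0 : p 0%R = 0%R by have := pZ 0%R 0%R; rewrite mulr0 mul0r.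
set P := fun x => (f l x * h (c x) * conjc (g x))%R.
have mP : cmeasurable P.
  apply: cmeasurableM; last exact: cmeasurableJ.
  exact: cmeasurableM (Lproj_L2 HP l).1 (cmeasurable_comp (measurable_code _) mh).
set G := fun x => ((csq (f l x))^-1 * p (P x))%R.
have mG : measurable_fun setT G.
  apply: measurable_funM; last exact: mp.
  exact: measurableT_comp (@measurable_inv R) (measurable_weight l).
transitivity (\int[mu]_x (G x * csq (f l x))%:E)%E.
  apply: eq_integral => x _; rewrite /G /proj_rep -/c -/(P x).
  have [fx0|fx0] := eqVneq (csq (f l x)) 0%R.
    by rewrite fx0 !mulr0 /P (csq_eq0 fx0) !mul0r p0.
  by rewrite mulrC mulrA mulfV // mul1r.
rewrite integral_weight_tau // integral_mkcond.
apply: eq_integral => y _; rewrite patchE /proj_adj.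
case: ifPn => [/set_mem Dy|_]; last by rewrite rmorph0 mulr0 p0.
rewrite /G /P /c code_tau // /adj_kernel !conjcM conjc_real conjcK.
by rewrite mulrCA pZ; congr (_ * p _)%:E; ring.
Qed.

(* Equal extended integrals have equal [Rintegral]s, so no integrability of
   [g] or [h] is needed. *)
Lemma cinner_proj_adj l g h : cmeasurable g -> cmeasurable h ->
  cinner mu (proj_rep code f l h) g = cinner mu h (proj_adj l g).
Proof.
move=> mg mh; rewrite /cinner /Rintegral.
rewrite (proj_adj_integral l (@cre_realM R) _ mg mh)
  ?(proj_adj_integral l (@cim_realM R) _ mg mh) //.
all: by move=> F [].
Qed.

Lemma proj_adj_L2_on l : (mu (A `\` code (kdeg L l) @^-1` A) = 0)%E ->
  forall g, L2_on mu A g -> L2_on mu A (proj_adj l g).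
Proof.
move=> null_A g [Lg g0]; split; first exact: proj_adj_L2.
have nullE :=
  ae_not_measure0 (measurableD mA (measurable_code_preimage _)) null_A.
have gE : {ae mu, forall x,
    (~ A x -> g x = 0%R) /\ ~ (A `\` code (kdeg L l) @^-1` A) x}.
  by apply: filterS2 g0 nullE => x; split.
apply: filterS (ae_tau_pullback l gE) => y gEy nAy; rewrite /proj_adj.
case: ifPn => [/set_mem Dy|//]; have [gy0 nE] := gEy Dy.
rewrite /adj_kernel gy0 ?mul0r ?mulr0// => Aty; apply: nE; split => //.
by rewrite /preimage /= code_tau.
Qed.

Lemma proj_rep_adj_invariant l : (mu (A `\` code (kdeg L l) @^-1` A) = 0)%E ->
  adj_invariant mu (L2_on mu A) (proj_rep code f l).
Proof.
move=> null_A g Ag; exists (proj_adj l g); first exact: proj_adj_L2_on.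
by move=> h Lh; apply: cinner_proj_adj; [exact: Ag.1.1|exact: Lh.1].
Qed.

End ProjectiveRepresentation.

Theorem proposition4p6 (k : nat) (L : kgraph k)
  (d : measure_display) (X : measurableType d) (R : realType)
  (mu : measure X R)
  (D : L -> set X) (tau : L -> X -> X) (code : Nk k -> X -> X)
  (f : L -> X -> R[i]) :
  row_finite L -> no_sources L ->
  Lprojective mu D tau code f ->
  irreducible mu (proj_rep code f) ->
  jointly_ergodic mu code.
Proof.
move=> _ _ HP irr A mA Ainv.
have S m := Lsbfs_sbfs (Lproj_sbfs HP) m.
have S0 := S (@Nk_zero k).
have mpre m : measurable (code m @^-1` A).
  rewrite -[Y in measurable Y]setTI.
  exact: (sbfs_code_meas (S m)) measurableT _ mA.
have mAE m := measurableD mA (mpre m).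
have mEA m := measurableD (mpre m) mA.
have null_A m : mu (A `\` code m @^-1` A) = 0%E.
  apply: (subset_measure0 (mAE m) _ _ (Ainv m)); last exact: subsetUl.
  exact: measurableU.
have null_pre m : mu (code m @^-1` A `\` A) = 0%E.
  apply: (subset_measure0 (mEA m) _ _ (Ainv m)); last exact: subsetUr.
  exact: measurableU.
have invariant_L2_on l := conj (proj_rep_invariant HP mA (null_pre (kdeg L l)))
                               (proj_rep_adj_invariant HP mA (null_A (kdeg L l))).
have [zero|full] := irr _ (closed_subspace_L2_on mu mA) invariant_L2_on.
- by left; exact: (L2_on_trivial_measure0 S0 (countable_kdeg L _) mA zero).
- by right; exact: (L2_on_full_measureC0 S0 (countable_kdeg L _) mA full).
Qed.
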